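(* Let $k$ be odd and, for $1\le m\le n$, let $C_m$ be the set of positions with exactly $m$ coordinates in $\{0,k-1\}$ and all other coordinates equal to $(k-1)/2$. Let $2\le t\le n-1$, let $I\subseteq\{1,\dots,n\}$ with $|I|=n-t$, let $c_l\in\{0,k-1\}$ for $l\in I$, and let $L=\{p\in M^n: p_l=c_l\ \forall l\in I\}$ be the corresponding external $t$-dimensional layer. For distinct $i,j\notin I$, let $\rho$ be the rotation of $L$: the permutation of $M^n$ sending each $p\in L$ to $\psi_{i,j}(p)$ and fixing all positions outside $L$. Then $\rho$ fixes every position of $C_m$ for every $m\le n-t$, and $\rho$ restricted to $C_{n-t+1}$ is an odd permutation of $C_{n-t+1}$.
   Context: $k\ge2$, $n\ge3$ integers, $M=\{0,\dots,k-1\}$, positions are elements of $M^n$. For distinct $i,j$, $\psi_{i,j}:M^n\to M^n$ is defined by $(\psi_{i,j}p)_i=k-1-p_j$, $(\psi_{i,j}p)_j=p_i$, $(\psi_{i,j}p)_l=p_l$ for $l\notin\{i,j\}$. *)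

From mathcomp Require Import all_boot all_fingroup.
Set Implicit Arguments. Unset Strict Implicit. Unset Printing Implicit Defensive.

(* Positions: elements of M^n with M = {0,...,k-1} = 'I_k, coordinates indexed by 'I_n
   (coordinate l in 'I_n corresponds to coordinate l+1 in the paper). *)
Definition position (k n : nat) := {ffun 'I_n -> 'I_k}.

(* psi_{i,j}: (psi p)_i = k-1-p_j, (psi p)_j = p_i, others unchanged.
   rev_ord x has value k - x.+1 = k-1-x. *)
Definition psi (k n : nat) (i j : 'I_n) (p : position k n) : position k n :=
  [ffun l => if l == i then rev_ord (p j) else if l == j then p i else p l].

Definition extreme (k : nat) (x : 'I_k) : bool := (val x == 0) || (val x == k.-1).

Definition Cset (k n m : nat) : {set position k n} :=
  [set p : position k n | (#|[set l | extreme (p l)]| == m) &&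
     [forall l, ~~ extreme (p l) ==> (val (p l) == k.-1./2)]].

Definition layer (k n : nat) (I : {set 'I_n}) (c : 'I_n -> 'I_k) : {set position k n} :=
  [set p : position k n | [forall l in I, p l == c l]].

Definition layer_rot (k n : nat) (I : {set 'I_n}) (c : 'I_n -> 'I_k) (i j : 'I_n)
  (p : position k n) : position k n :=
  if p \in layer I c then psi i j p else p.
Arguments layer_rot {k n} I c i j p.
Arguments layer {k n} I c.
Arguments psi {k n} i j p.

From mathcomp Require Import all_boot all_fingroup zify.
Set Implicit Arguments. Unset Strict Implicit. Unset Printing Implicit Defensive.

(* Write k = 2h + 1.  When m <= |I| = n - t, a position of C_m in the layer L
   has all its extreme coordinates in I, so its coordinates i and j equal h,
   and psi_{i,j} fixes it because k - 1 - h = h.  A position of L in C_{|I|+1}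
   has exactly one extreme coordinate l outside I; it is moved only if l is i
   or j.  Writing (l:v) for the position with p_l = v, these four positions
   form the cycle (i:0) -> (j:0) -> (i:k-1) -> (j:k-1) -> (i:0), and a 4-cycle
   is an odd permutation. *)

Lemma four_cycle_perm (T : finType) (a b c d : T) : uniq [:: a; b; c; d] ->
  exists s : {perm T}, odd_perm s /\ [/\ s a = b, s b = c, s c = d, s d = a
    & forall x, x \notin [:: a; b; c; d] -> s x = x].
Proof.
rewrite /= !inE !negb_or -!andbA andbT => /and5P[ab ac ad bc /andP[bd cd]].
have [cb db dc] : [/\ c != b, d != b & d != c] by rewrite (eq_sym c) !(eq_sym d).
exists (tperm a b * tperm a c * tperm a d)%g; split.
  by rewrite !odd_permM !odd_tperm ab ac ad.
split.
- by rewrite !permM tpermL !tpermD.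
- by rewrite !permM tpermR tpermL tpermD.
- by rewrite !permM (tpermD ac bc) tpermR tpermL.
- by rewrite !permM (tpermD ad bd) (tpermD ad cd) tpermR.
- move=> x; rewrite !inE !negb_or => /and4P[xa xb xc xd].
  by rewrite !permM !tpermD // eq_sym.
Qed.

Definition mid_ord (k : nat) : 'I_k.+1 := inord k./2.

Lemma mid_ordE k : val (mid_ord k) = k./2.
Proof. by apply: inordK; rewrite ltnS -divn2 leq_div. Qed.

Lemma extremeE k (x : 'I_k.+1) : extreme x = (x == ord0) || (x == ord_max).
Proof. by []. Qed.

Lemma extreme_ord0 k : extreme (ord0 : 'I_k.+1).
Proof. by []. Qed.

Lemma extreme_ord_max k : extreme (ord_max : 'I_k.+1).
Proof. by rewrite extremeE eqxx orbT. Qed.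

Lemma rev_ord0 k : rev_ord (ord0 : 'I_k.+1) = ord_max.
Proof. by apply: val_inj; rewrite /= subn1. Qed.

Lemma rev_ord_max k : rev_ord (ord_max : 'I_k.+1) = ord0.
Proof. by apply: val_inj; rewrite /= subnn. Qed.

Section EvenOrder.

Variable k : nat.
Hypotheses (k_gt0 : 0 < k) (k_even : ~~ odd k).

Let half_double : k./2 + k./2 = k.
Proof. by have := odd_double_half k; rewrite (negbTE k_even) -addnn. Qed.

Lemma mid_ord_nonextreme : ~~ extreme (mid_ord k).
Proof. rewrite /extreme mid_ordE; lia. Qed.

Lemma rev_mid_ord : rev_ord (mid_ord k) = mid_ord k.
Proof. apply: val_inj; rewrite /= mid_ordE; lia. Qed.

Lemma extreme_neq_mid (x : 'I_k.+1) : extreme x -> x != mid_ord k.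
Proof. by apply: contraTneq => ->; apply: mid_ord_nonextreme. Qed.

Lemma psi_mid_fix n (i j : 'I_n) (p : position k.+1 n) :
  p i = mid_ord k -> p j = mid_ord k -> psi i j p = p.
Proof.
move=> pi pj; apply/ffunP => l; rewrite ffunE.
case: eqP => [->|_]; first by rewrite pj pi rev_mid_ord.
by case: eqP => [->|]; rewrite ?pi ?pj.
Qed.

End EvenOrder.

Lemma Cset_nonextreme k n m (p : position k.+1 n) l :
  p \in Cset k.+1 n m -> ~~ extreme (p l) -> p l = mid_ord k.
Proof.
rewrite inE => /andP[_ /forallP/(_ l)/implyP pl /pl/eqP pl_mid].
by apply: val_inj; rewrite pl_mid mid_ordE.
Qed.

Lemma card_extreme_Cset k n m (p : position k.+1 n) :
  p \in Cset k.+1 n m -> #|[set l | extreme (p l)]| = m.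
Proof. by rewrite inE => /andP[/eqP]. Qed.

Section Layer.

Variables (k n : nat) (I : {set 'I_n}) (c : 'I_n -> 'I_k.+1).
Hypothesis c_extreme : forall l, l \in I -> extreme (c l).

Lemma layer_extreme_subset (p : position k.+1 n) :
  p \in layer I c -> I \subset [set l | extreme (p l)].
Proof.
rewrite inE => /forall_inP pI; apply/subsetP => l lI.
by rewrite inE (eqP (pI l lI)) c_extreme.
Qed.

Lemma layer_Cset_extremeE m (p : position k.+1 n) :
  p \in layer I c -> p \in Cset k.+1 n m -> m <= #|I| ->
  [set l | extreme (p l)] = I.
Proof.
move=> pL pC mI; apply/esym/eqP.
by rewrite eqEcard layer_extreme_subset // (card_extreme_Cset pC).
Qed.

Definition layer_point (l : 'I_n) (v : 'I_k.+1) : position k.+1 n :=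
  [ffun l' => if l' \in I then c l' else if l' == l then v else mid_ord k].

Lemma layer_point_in_layer l v : layer_point l v \in layer I c.
Proof. by rewrite inE; apply/forall_inP => l' l'I; rewrite ffunE l'I. Qed.

Lemma layer_point_at l v : l \notin I -> layer_point l v l = v.
Proof. by move=> lI; rewrite ffunE (negbTE lI) eqxx. Qed.

Lemma layer_point_other l l' v :
  l' \notin I -> l' != l -> layer_point l v l' = mid_ord k.
Proof. by move=> l'I l'l; rewrite ffunE (negbTE l'I) (negbTE l'l). Qed.

Lemma layer_pointE (p : position k.+1 n) l :
  p \in layer I c -> p \in Cset k.+1 n #|I|.+1 -> l \notin I -> extreme (p l) ->
  p = layer_point l (p l).
Proof.
move=> pL pC lI pl_ext.
have extE : [set l' | extreme (p l')] = l |: I.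
  apply/esym/eqP; rewrite eqEcard subUset sub1set inE pl_ext.
  by rewrite layer_extreme_subset // (card_extreme_Cset pC) cardsU1 lI ltnSn.
apply/ffunP => l'; rewrite ffunE; case: ifPn => [l'I|l'I].
  by move: pL; rewrite inE => /forall_inP/(_ l' l'I)/eqP.
case: eqP => [-> //|/eqP l'l]; apply: Cset_nonextreme pC _.
by rewrite -[extreme _](in_set (fun l' => extreme (p l'))) extE !inE negb_or l'l.
Qed.

Section Rotation.

Hypotheses (k_gt0 : 0 < k) (k_even : ~~ odd k).

Lemma layer_point_in_Cset l v :
  l \notin I -> extreme v -> layer_point l v \in Cset k.+1 n #|I|.+1.
Proof.
move=> lI v_ext; rewrite inE; apply/andP; split.
  have -> : [set l' | extreme (layer_point l v l')] = l |: I.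
    apply/setP => l'; rewrite !inE ffunE; case: ifPn => l'I.
      by rewrite orbT c_extreme.
    by rewrite orbF; case: eqP => // _; apply/negbTE/mid_ord_nonextreme.
  by rewrite cardsU1 lI.
apply/forallP => l'; apply/implyP; rewrite ffunE; case: ifPn => l'I.
  by rewrite c_extreme.
by case: eqP => _; rewrite ?v_ext // mid_ordE.
Qed.

Variables i j : 'I_n.
Hypotheses (i_notin : i \notin I) (j_notin : j \notin I) (i_neq_j : i != j).

Let j_neq_i : j != i. Proof. by rewrite eq_sym. Qed.

Lemma layer_rot_layer_point_i v :
  layer_rot I c i j (layer_point i v) = layer_point j v.
Proof.
rewrite /layer_rot layer_point_in_layer.
apply/ffunP => l; rewrite !ffunE !(negbTE i_notin, negbTE j_notin) eqxx.
have [->|_] := eqVneq l i.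
  by rewrite (negbTE i_notin) (negbTE j_neq_i) (negbTE i_neq_j) rev_mid_ord.
by case: (l =P j) => [->|/eqP/negbTE lj]; rewrite ?(negbTE j_notin) ?lj.
Qed.

Lemma layer_rot_layer_point_j v :
  layer_rot I c i j (layer_point j v) = layer_point i (rev_ord v).
Proof.
rewrite /layer_rot layer_point_in_layer.
apply/ffunP => l; rewrite !ffunE !(negbTE i_notin, negbTE j_notin) eqxx.
have [->|li] := eqVneq l i; first by rewrite (negbTE i_notin).
by have [->|lj] := eqVneq l j; rewrite ?(negbTE li) ?(negbTE i_neq_j) ?(negbTE j_notin).
Qed.

Lemma layer_rot_small m (p : position k.+1 n) :
  m <= #|I| -> p \in Cset k.+1 n m -> layer_rot I c i j p = p.
Proof.
move=> mI pC; rewrite /layer_rot; case: ifPn => // pL.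
have extE := layer_Cset_extremeE pL pC mI.
have mid_off l : l \notin I -> p l = mid_ord k.
  by move=> lI; apply: Cset_nonextreme pC _; rewrite -extE inE in lI.
by apply: psi_mid_fix; rewrite ?mid_off.
Qed.

Definition rotated_points : seq (position k.+1 n) :=
  [:: layer_point i ord0; layer_point j ord0;
      layer_point i ord_max; layer_point j ord_max].

Lemma rotated_points_uniq : uniq rotated_points.
Proof.
apply: (map_uniq (f := fun p : position k.+1 n => (p i, p j))).
rewrite /= !layer_point_at // !layer_point_other //.
have h0 := extreme_neq_mid k_gt0 k_even (extreme_ord0 k).
have hm := extreme_neq_mid k_gt0 k_even (extreme_ord_max k).
have m0 : (ord_max : 'I_k.+1) != ord0 by rewrite -val_eqE /= -lt0n.
rewrite !inE !negb_or !xpair_eqE.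
by rewrite eqxx !(eq_sym (mid_ord k)) (negbTE h0) (negbTE hm) (eq_sym ord0) (negbTE m0).
Qed.

Lemma layer_rot_Cset_cases (p : position k.+1 n) :
  p \in Cset k.+1 n #|I|.+1 -> layer_rot I c i j p = p \/ p \in rotated_points.
Proof.
move=> pC; rewrite /layer_rot; case: ifPn => pL; last by left.
have [pi_ext|pi_nonext] := boolP (extreme (p i)).
  right; rewrite (layer_pointE pL pC i_notin pi_ext) !inE.
  by move: pi_ext; rewrite extremeE => /orP[]/eqP->; rewrite eqxx ?orbT.
have [pj_ext|pj_nonext] := boolP (extreme (p j)).
  right; rewrite (layer_pointE pL pC j_notin pj_ext) !inE.
  by move: pj_ext; rewrite extremeE => /orP[]/eqP->; rewrite eqxx ?orbT.
by left; apply: psi_mid_fix => //; apply: Cset_nonextreme pC _.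
Qed.

End Rotation.

End Layer.

Theorem mainTheorem11 (k n t : nat) (I : {set 'I_n}) (c : 'I_n -> 'I_k) (i j : 'I_n) :
  2 <= k -> 3 <= n -> odd k ->
  2 <= t -> t <= n - 1 ->
  #|I| = n - t ->
  (forall l, l \in I -> extreme (c l)) ->
  i != j -> i \notin I -> j \notin I ->
  (forall m, 1 <= m -> m <= n - t ->
     forall p, p \in Cset k n m -> layer_rot I c i j p = p) /\
  (exists s : {perm {p : position k n | p \in Cset k n (n - t).+1}},
     (forall x, val (s x) = layer_rot I c i j (val x)) /\ odd_perm s).
Proof.
move: c; case: k => [|k] c // k_gt0 _ k_odd _ _ cardI c_ext i_neq_j iI jI.
have k_even : ~~ odd k := k_odd.
split=> [m _ m_le p|]; first by apply: layer_rot_small; rewrite ?cardI.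
rewrite -cardI; set C := Cset k.+1 n #|I|.+1.
have ext0 := extreme_ord0 k.
have extm := extreme_ord_max k.
pose pt l v (lI : l \notin I) (v_ext : extreme v) : {p | p \in C} :=
  exist (fun p => p \in C) _ (layer_point_in_Cset c_ext k_gt0 k_even lI v_ext).
pose pts := [:: pt _ _ iI ext0; pt _ _ jI ext0; pt _ _ iI extm; pt _ _ jI extm].
have uniq_pts : uniq pts by rewrite -(map_inj_uniq val_inj) rotated_points_uniq.
have [s [odd_s [sA sB sC sD s_fix]]] := four_cycle_perm uniq_pts.
exists s; split=> // x.
have [x_pt|x_pt] := boolP (x \in pts).
  move: x_pt; rewrite !inE => /or4P[] /eqP->.
  - by rewrite sA /= layer_rot_layer_point_i.
  - by rewrite sB /= layer_rot_layer_point_j // rev_ord0.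
  - by rewrite sC /= layer_rot_layer_point_i.
  - by rewrite sD /= layer_rot_layer_point_j // rev_ord_max.
rewrite s_fix //.
have [->//|] := layer_rot_Cset_cases c_ext k_gt0 k_even iI jI (valP x).
by move=> x_rot; case/negP: x_pt; rewrite -(mem_map val_inj).
Qed.
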